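(* Let $n\ge 1$ and $m\ge 2$ be integers with $m\nmid n$, let $\ell=\lfloor n/m\rfloor$, and let $G_{n,m}=\{\theta_{m,0}+\sum_{k=1}^{\ell}a_k\theta_{m,k}: a_k\in\mathbb{F}_2\}$. Then $G_{n,m}$ is an abelian group under composition of maps, and it is isomorphic to the unit group $\left(\mathbb{F}_2[z]/(z^{\ell+1})\right)^*$.
   Context: For $x=(x_0,\dots,x_{n-1})\in\mathbb{F}_2^n$, indices of coordinates are taken modulo $n$. For a nonnegative integer $k$, the map $\theta_{m,k}\colon\mathbb{F}_2^n\to\mathbb{F}_2^n$ is defined by $\theta_{m,k}(x)=y$ with $y_i=x_{i+mk}\prod_{1\le j\le mk-1,\ m\nmid j}(x_{i+j}+1)$ for $i\in\{0,\dots,n-1\}$; $\theta_{m,0}$ is the identity map. Sums of maps are pointwise sums. *)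

From HB Require Import structures.
From mathcomp Require Import all_boot all_fingroup all_algebra.
Set Implicit Arguments. Unset Strict Implicit. Unset Printing Implicit Defensive.
Import GRing.Theory.
Local Open Scope ring_scope.

Notation vec n := {ffun 'I_n -> 'F_2}.

(* coordinate x_k with index taken modulo n (meaningful for n >= 1) *)
Definition xat (n : nat) (x : vec n) (k : nat) : 'F_2 :=
  match (insub (k %% n)%N : option 'I_n) with Some i => x i | None => 0 end.

Notation map_n n := {ffun vec n -> vec n}.

Definition idmap_n (n : nat) : map_n n := [ffun x => x].

Definition compose_n (n : nat) (f g : map_n n) : map_n n := [ffun x => f (g x)].

Definition theta (n m k : nat) : map_n n :=
  [ffun x : vec n => if k == 0%N then x else
     [ffun i : 'I_n => xat x (i + m * k)%N *
        \prod_(1 <= j < (m * k)%N | ~~ (m %| j)%N) (xat x (i + j)%N + 1)]].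

(* G_{n,m} = { theta_{m,0} + sum_{k=1}^{l} a_k theta_{m,k} : a_k in F_2 },
   l = floor(n/m); sums of maps are pointwise. a is indexed by k-1. *)
Definition Gnm (n m : nat) : {set map_n n} :=
  [set f | [exists a : {ffun 'I_(n %/ m)%N -> 'F_2},
     f == [ffun x => [ffun i : 'I_n =>
              theta n m 0 x i + \sum_(k < n %/ m) a k * theta n m k.+1 x i]]]].

Notation QR l := {poly %/ ('X^(l.+1) : {poly 'F_2})}.

(* Write l = n / m and theta_k = theta_{m,k}.  The key identity is
   theta_k (x + theta_j x) = theta_k x + theta_{k+j} x  for j >= 1, which only
   involves one window of coordinates and holds for arbitrary sequences.  Since m does not divide n, theta_k = 0 for k > l, so
   p |-> sum_k p_k theta_k depends only on p mod z^(l+1), and the identity says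
   that precomposing with theta_0 + theta_j multiplies p by 1 + z^j.  Over F_2
   every unit of F_2[z]/(z^(l+1)) is a product of such binomials, because
   (1 + z^s)^(2^l) = 1, so composition in G_{n,m} is multiplication of units.
   Evaluating at the coordinate vectors e_{mk} reads off the coefficients and
   inverts the correspondence. *)

From HB Require Import structures.
From mathcomp Require Import all_boot all_fingroup all_algebra.
From mathcomp Require Import zify.
Import GRing.Theory.
Local Open Scope ring_scope.

Lemma F2_eq1 (v : 'F_2) : v != 0 -> v = 1.
Proof. by case: v => [[|[|//]]] // ? _; apply: val_inj. Qed.

Lemma F2_addrr (v : 'F_2) : v + v = 0.
Proof. by rewrite addrr_pchar2 // pchar_Fp. Qed.

Section Streams.

Variable m : nat.
Implicit Types (X Y : nat -> 'F_2) (a s K J : nat).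

Definition quiet X a K : bool :=
  all (fun s => (m %| s)%N || (X (a + s)%N == 0)) (iota 1 K.-1).

Definition theta_seq X K a : 'F_2 := if quiet X a K then X (a + K)%N else 0.

Lemma quietP X a K :
  reflect (forall s, (0 < s < K)%N -> ~~ (m %| s)%N -> X (a + s)%N = 0) (quiet X a K).
Proof.
apply: (iffP allP) => [Xq s s_lt m_s | Xq s].
  have /Xq : s \in iota 1 K.-1 by rewrite mem_iota; lia.
  by rewrite (negbTE m_s) => /eqP.
rewrite mem_iota => s_lt; have [//|m_s] := boolP (m %| s)%N.
by rewrite Xq //; lia.
Qed.

Lemma quietPn X a K :
  ~~ quiet X a K -> exists2 s, (0 < s < K)%N && ~~ (m %| s)%N & X (a + s)%N = 1.
Proof.
case/allPn => s; rewrite mem_iota negb_or => s_lt /andP[m_s /F2_eq1 Xs].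
by exists s; rewrite // m_s andbT; lia.
Qed.
Arguments quietPn [X a K].

Lemma prod_quiet X a K :
  \prod_(1 <= j < K | ~~ (m %| j)%N) (X (a + j)%N + 1) = (quiet X a K)%:R.
Proof.
rewrite /quiet /index_iota subn1 -big_filter.
elim: (iota 1 K.-1) => [|s r IH] /=; first by rewrite big_nil.
case: (m %| s)%N => //=; rewrite big_cons IH.
have [->|/F2_eq1->] := eqVneq (X (a + s)%N) 0; first by rewrite add0r mul1r.
by rewrite F2_addrr mul0r.
Qed.

Lemma eq_theta_seq X Y K : X =1 Y -> theta_seq X K =1 theta_seq Y K.
Proof.
move=> eqXY a; rewrite /theta_seq /quiet eqXY.
by under eq_all => s do rewrite eqXY.
Qed.

Lemma quiet_cat X a K J : (m %| K)%N ->
  quiet X a (K + J) = quiet X a K && quiet X (a + K) J.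
Proof.
move=> m_K; apply/quietP/andP => [Xq | [/quietP XqK /quietP XqJ]].
  split; apply/quietP => s s_lt m_s; first by apply: Xq => //; lia.
  by rewrite -addnA; apply: Xq; rewrite ?dvdn_addr //; lia.
move=> s s_lt m_s; have [s_ltK|s_geK] := ltnP s K; first by apply: XqK => //; lia.
have -> : (a + s = a + K + (s - K))%N by lia.
apply: XqJ; last by rewrite -(dvdn_addr _ m_K) subnKC.
suff : s != K by lia.
by apply: contraNneq m_s => ->.
Qed.

Section Composition.

Variables (X : nat -> 'F_2) (K J : nat).
Hypotheses (m_K : (m %| K)%N) (m_J : (m %| J)%N) (J_gt0 : (0 < J)%N).

Let Y t := X t + theta_seq X J t.

Lemma quiet_straddle_l a s : (0 < s < K)%N -> ~~ (m %| s)%N -> (K <= s + J)%N ->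
  quiet X (a + s) J -> X (a + K)%N = 0.
Proof.
move=> /andP[s_gt0 s_lt_K] m_s sJ_ge /quietP XqJ.
have m_Ks : ~~ (m %| K - s)%N.
  by apply: contra m_s => m_Ks; rewrite -(subKn (ltnW s_lt_K)) dvdn_sub.
have Ks_neJ : (K - s != J)%N by apply: contraNneq m_Ks => ->.
rewrite -(subnKC (ltnW s_lt_K)) addnA XqJ //.
by rewrite subn_gt0 s_lt_K ltn_neqAle Ks_neJ leq_subLR.
Qed.

Lemma quiet_straddle_r a s : (0 < s < K)%N -> ~~ (m %| s)%N -> (K <= s + J)%N ->
  quiet X (a + K) J -> X (a + s + J)%N = 0.
Proof.
move=> /andP[s_gt0 s_lt_K] m_s sJ_ge /quietP XqJ.
have m_sJK : ~~ (m %| s + J - K)%N.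
  apply: contra m_s => m_sJK.
  by rewrite -(dvdn_addl _ m_J) -(subnK sJ_ge) dvdn_add.
have sJK_gt0 : (0 < s + J - K)%N by rewrite lt0n; apply: contraNneq m_sJK => ->.
rewrite -addnA -(subnKC sJ_ge) addnA XqJ // sJK_gt0 /=.
by rewrite ltn_subLR // ltn_add2r.
Qed.

Arguments quiet_straddle_l [a s].
Arguments quiet_straddle_r [a s].

Lemma quiet_comp a : quiet X a K -> Y (a + K) != 0 -> quiet Y a K.
Proof.
move=> /quietP XqK YK; apply/quietP => s s_lt m_s.
rewrite /Y XqK // add0r /theta_seq; case: ifP => // XqJ.
have [sJ_lt|sJ_ge] := ltnP (s + J) K.
  by rewrite -addnA XqK ?dvdn_addl //; lia.
apply: (quiet_straddle_r s_lt m_s sJ_ge); move: YK.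
rewrite /Y (quiet_straddle_l s_lt m_s sJ_ge XqJ) add0r /theta_seq.
by case: ifP; rewrite ?eqxx.
Qed.

Lemma theta_seq_comp_nquiet a : ~~ quiet X a K -> theta_seq Y K a = 0.
Proof.
move=> XnqK; rewrite /theta_seq; case: ifP => // /quietP YqK.
(* At the last position s of the window where X is 1, Y vanishes only if
   X is 1 at s + J; by maximality s + J lies beyond K, and then Y (a + K) = 0. *)
pose P s := [&& (0 < s < K)%N, ~~ (m %| s)%N & X (a + s)%N == 1].
have exP : exists s, P s.
  by have [s /andP[s_lt m_s] Xs] := quietPn XnqK; exists s; rewrite /P s_lt m_s Xs eqxx.
have ubP s : P s -> (s <= K)%N by case/and3P => s_lt _ _; lia.
case: (ex_maxnP exP ubP) => s /and3P[s_lt m_s /eqP Xs] s_max.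
have := YqK s s_lt m_s; rewrite /Y Xs /theta_seq.
case: ifP => [XqJ|_]; last by move/eqP; rewrite addr0 oner_eq0.
have [->|/F2_eq1 XsJ _] := eqVneq (X (a + s + J)%N) 0.
  by rewrite addr0 => /eqP; rewrite oner_eq0.
have [sJ_lt|sJ_ge] := ltnP (s + J) K.
  suff : (s + J <= s)%N by lia.
  by apply: s_max; rewrite /P dvdn_addl // m_s addnA XsJ eqxx andbT; lia.
rewrite (quiet_straddle_l s_lt m_s sJ_ge XqJ) add0r /theta_seq; case: ifP => // XqJK.
by move: XsJ; rewrite (quiet_straddle_r s_lt m_s sJ_ge XqJK) => /eqP; rewrite eq_sym oner_eq0.
Qed.

Lemma theta_seq_comp a : theta_seq Y K a = theta_seq X K a + theta_seq X (K + J) a.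
Proof.
rewrite [in RHS]/theta_seq quiet_cat // addnA.
have [XqK|XnqK] /= := boolP (quiet X a K); last by rewrite theta_seq_comp_nquiet // addr0.
have -> : X (a + K)%N + (if quiet X (a + K) J then X (a + K + J)%N else 0) = Y (a + K) by [].
rewrite /theta_seq; have [->|YK] := eqVneq (Y (a + K)) 0; first by case: ifP.
by rewrite quiet_comp.
Qed.

End Composition.

End Streams.

Section TruncatedPolynomials.

Variable l : nat.
Local Notation h := ('X^(l.+1) : {poly 'F_2}).
Implicit Types (p q : {poly 'F_2}) (u v : QR l).

Lemma coef_in_qpolyXn p k : (in_qpoly h p)`_k = if (k < l.+1)%N then p`_k else 0.
Proof. by rewrite /= mk_monic_Xn -Pdiv.RingMonic.take_poly_rmodp coef_take_poly. Qed.

Lemma coef_qpolyXn_eq0 u k : (l < k)%N -> u`_k = 0.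
Proof.
move=> l_lt_k; apply: nth_default; rewrite -ltnS.
by apply: leq_trans (size_mk_monic u) _; rewrite mk_monic_Xn size_polyXn.
Qed.

Lemma qpolyXnP u v : (forall k, (k < l.+1)%N -> u`_k = v`_k) -> u = v.
Proof.
move=> eq_uv; apply/val_inj/polyP => k.
by have [/eq_uv//|l_lt_k] := ltnP k l.+1; rewrite !coef_qpolyXn_eq0.
Qed.

Lemma in_qpolyXnK u : in_qpoly h u = u.
Proof. by apply: qpolyXnP => k k_lt; rewrite coef_in_qpolyXn k_lt. Qed.

Lemma unit_qpolyXnE u : (u \is a GRing.unit) = (u`_0 == 1).
Proof.
rewrite -[_ \is a _]/(coprimep (mk_monic h) u) [X in coprimep X _]mk_monic_Xn.
rewrite coprimep_pexpl // coprimep_sym coprimepX.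
by rewrite rootE horner_coef0; case: (eqVneq u`_0 0) => [->|/F2_eq1->].
Qed.

Lemma in_qpoly_1DXn_pow2 s : (0 < s)%N -> in_qpoly h ((1 + 'X^s) ^+ (2 ^ l)) = 1.
Proof.
move=> s_gt0; have pchar2 : [pchar {poly 'F_2}].-nat (2 ^ l)%N.
  by rewrite pnatX pnatE // pchar_poly pchar_Fp.
rewrite exprDn_pchar // expr1n -exprM; apply: qpolyXnP => k k_lt.
rewrite coef_in_qpolyXn k_lt coefD coefXn.
suff /negbTE-> : (k != s * 2 ^ l)%N by rewrite addr0.
by have := ltn_expl l (ltnSn 1); have := leq_pmull (2 ^ l) s_gt0; lia.
Qed.

Lemma qpolyXn_prod_1DXn u : u`_0 = 1 ->
  exists2 js : seq nat, all (leq 1) js & u = in_qpoly h (\prod_(j <- js) (1 + 'X^j)).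
Proof.
(* Multiplying by 1 + X^s clears the coefficient at s, and the factor is
   undone by (1 + X^s)^(2^l - 1). *)
move=> u0; suff factor d s v : (l < s + d)%N -> (0 < s)%N -> v`_0 = 1 ->
    (forall k, (0 < k < s)%N -> v`_k = 0) ->
    exists2 js : seq nat, all (leq 1) js & v = in_qpoly h (\prod_(j <- js) (1 + 'X^j)).
  by apply: (factor l 1%N) => // k; lia.
elim: d s v => [|d IHd] s v l_lt_sd s_gt0 v0 v_k.
  exists [::] => //; rewrite big_nil in_qpoly1; apply: qpolyXnP => k k_lt.
  by case: k k_lt => [|k] k_lt; rewrite coef1 ?v0 //= v_k //; lia.
have [vs0|/F2_eq1 vs1] := eqVneq v`_s 0.
  apply: (IHd s.+1) => //; [lia | move=> k k_lt].
  by have [->//|k_ne_s] := eqVneq k s; apply: v_k; lia.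
set b := in_qpoly h (1 + 'X^s).
have vbE k : (k < l.+1)%N -> (v * b)`_k = v`_k + (if (k < s)%N then 0 else v`_(k - s)).
  move=> k_lt; rewrite -{1}[v]in_qpolyXnK -in_qpolyM coef_in_qpolyXn k_lt.
  by rewrite mulrDr mulr1 coefD coefMXn.
have [js js_pos vbP] : exists2 js : seq nat, all (leq 1) js &
    v * b = in_qpoly h (\prod_(j <- js) (1 + 'X^j)).
  apply: (IHd s.+1) => //; [lia | by rewrite vbE // s_gt0 addr0 | move=> k k_lt].
  have [l_lt_k|k_le_l] := ltnP l k; first exact: coef_qpolyXn_eq0.
  rewrite vbE //.
  have [->|k_ne_s] := eqVneq k s; first by rewrite ltnn subnn vs1 v0 F2_addrr.
  by rewrite ifT ?addr0 ?v_k //; lia.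
exists (js ++ nseq (2 ^ l).-1 s); first by rewrite all_cat js_pos all_nseq s_gt0 orbT.
rewrite big_cat big_nseq iter_mulr_1 in_qpolyM -vbP -mulrA -in_qpolyM -exprS.
by rewrite prednK ?expn_gt0 // in_qpoly_1DXn_pow2 // mulr1.
Qed.

End TruncatedPolynomials.

Section Theta.

Variables n m : nat.
Hypotheses (n_gt0 : (0 < n)%N) (m_gt0 : (0 < m)%N).
Implicit Types (x y : vec n) (i : 'I_n) (p q : {poly 'F_2}).

Lemma xatE x k : xat x k = x (Ordinal (ltn_pmod k n_gt0)).
Proof.
rewrite /xat; case: insubP => [i _ ik|]; last by rewrite ltn_pmod.
by congr (x _); apply: val_inj.
Qed.

Lemma xat_mod x k : xat x (k %% n) = xat x k.
Proof. by rewrite !xatE; congr (x _); apply: val_inj; rewrite /= modn_mod. Qed.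

Lemma xatD x y k : xat (x + y) k = xat x k + xat y k.
Proof. by rewrite !xatE ffunE. Qed.

Lemma theta0 x : theta n m 0 x = x.
Proof. by rewrite ffunE. Qed.

Lemma thetaE k x i : (0 < k)%N -> theta n m k x i = theta_seq m (xat x) (m * k) i.
Proof.
move=> k_gt0; rewrite ffunE (negbTE (lt0n_neq0 k_gt0)) ffunE prod_quiet /theta_seq.
by case: quiet; rewrite ?mulr1 ?mulr0.
Qed.

Lemma xat_modDl x t s : xat x (t %% n + s) = xat x (t + s).
Proof. by rewrite -xat_mod modnDml xat_mod. Qed.

Lemma xat_theta k x t : (0 < k)%N -> xat (theta n m k x) t = theta_seq m (xat x) (m * k) t.
Proof.
move=> k_gt0; rewrite xatE thetaE //= /theta_seq /quiet xat_modDl.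
by under eq_all => s do rewrite xat_modDl.
Qed.

Lemma theta_comp k j x : (0 < j)%N ->
  theta n m k (x + theta n m j x) = theta n m k x + theta n m (k + j) x.
Proof.
move=> j_gt0; apply/ffunP => i; rewrite [RHS]ffunE.
have [->|k_gt0] := posnP k; first by rewrite !theta0 ffunE.
rewrite !thetaE ?addn_gt0 ?k_gt0 // mulnDr -theta_seq_comp ?dvdn_mulr ?muln_gt0 ?m_gt0 //.
by apply: eq_theta_seq => t; rewrite xatD xat_theta.
Qed.

Hypothesis m_ndvd_n : ~~ (m %| n)%N.
Let l := (n %/ m)%N.

Lemma theta_eq0 k x : (l < k)%N -> theta n m k x = 0.
Proof.
move=> l_lt_k; apply/ffunP => i; rewrite [RHS]ffunE thetaE; last by lia.
have n_lt_mk : (n < m * k)%N.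
  by apply: leq_trans (ltn_ceil n m_gt0) _; rewrite mulnC leq_pmul2l.
rewrite /theta_seq; case: ifP => // /quietP Xq.
have m_mkn : ~~ (m %| m * k - n)%N.
  by apply: contra m_ndvd_n => m_d; rewrite -(subKn (ltnW n_lt_mk)) dvdn_sub ?dvdn_mulr.
have -> : (i + m * k = i + (m * k - n) + n)%N by lia.
by rewrite -xat_mod modnDr xat_mod Xq //; lia.
Qed.

Local Notation h := ('X^(l.+1) : {poly 'F_2}).

Definition theta_poly (p : {poly 'F_2}) : map_n n :=
  [ffun x => [ffun i => \sum_(k < l.+1) p`_k * theta n m k x i]].

Lemma theta_polyE p x i : theta_poly p x i = \sum_(k < l.+1) p`_k * theta n m k x i.
Proof. by rewrite !ffunE. Qed.

Lemma eq_theta_poly p q : (forall k, (k < l.+1)%N -> p`_k = q`_k) -> theta_poly p = theta_poly q.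
Proof.
move=> eq_pq; apply/ffunP => x; apply/ffunP => i; rewrite !theta_polyE.
by apply: eq_bigr => k _; rewrite eq_pq.
Qed.

Lemma theta_poly_in_qpoly p : theta_poly (in_qpoly h p) = theta_poly p.
Proof. by apply: eq_theta_poly => k k_lt; rewrite coef_in_qpolyXn k_lt. Qed.

Lemma theta_poly_recl p x i :
  theta_poly p x i = p`_0 * x i + \sum_(k < l) p`_k.+1 * theta n m k.+1 x i.
Proof. by rewrite theta_polyE big_ord_recl theta0. Qed.

Lemma theta_poly1 x : theta_poly 1 x = x.
Proof.
apply/ffunP => i; rewrite theta_poly_recl coef1 mul1r big1 ?addr0 // => k _.
by rewrite coef1 mul0r.
Qed.

Lemma theta_polyD p q x : theta_poly (p + q) x = theta_poly p x + theta_poly q x.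
Proof.
apply/ffunP => i; rewrite [RHS]ffunE !theta_polyE -big_split.
by apply: eq_bigr => k _; rewrite coefD mulrDl.
Qed.

Lemma theta_poly_mulXn p j x i :
  theta_poly (p * 'X^j) x i = \sum_(k < l.+1) p`_k * theta n m (k + j) x i.
Proof.
have widen N (c : nat -> 'F_2) : (l < N)%N ->
    \sum_(k < N) c k * theta n m k x i = \sum_(k < l.+1) c k * theta n m k x i.
  move=> l_lt_N; rewrite (big_ord_widen N (fun k => c k * theta n m k x i) l_lt_N).
  rewrite [RHS]big_mkcond; apply: eq_bigr => k _; case: ltnP => // k_ge.
  by rewrite theta_eq0 // ffunE mulr0.
rewrite theta_polyE -(widen (j + l.+1)%N) ?ltn_addl // big_split_ord /= big1 ?add0r.
  by apply: eq_bigr => k _; rewrite coefMXn ltnNge leq_addr /= addKn addnC.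
by move=> k _; rewrite coefMXn ltn_ord mul0r.
Qed.

Lemma theta_poly_1DXn j x : (0 < j)%N -> theta_poly (1 + 'X^j) x = x + theta n m j x.
Proof.
move=> j_gt0; apply/ffunP => i; rewrite theta_polyD theta_poly1 [LHS]ffunE [RHS]ffunE.
have := theta_poly_mulXn 1 j x i; rewrite mul1r => ->.
rewrite big_ord_recl coef1 mul1r big1 ?addr0 //.
by move=> k _; rewrite coef1 mul0r.
Qed.

Lemma theta_poly_comp_1DXn p j x : (0 < j)%N ->
  theta_poly p (theta_poly (1 + 'X^j) x) = theta_poly (p * (1 + 'X^j)) x.
Proof.
move=> j_gt0; apply/ffunP => i.
rewrite theta_poly_1DXn // mulrDr mulr1 theta_polyD [RHS]ffunE theta_poly_mulXn.
rewrite !theta_polyE -big_split.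
by apply: eq_bigr => k _; rewrite theta_comp // ffunE mulrDr.
Qed.

Lemma theta_poly_comp_prod p js x : all (leq 1) js ->
  theta_poly p (theta_poly (\prod_(j <- js) (1 + 'X^j)) x)
  = theta_poly (p * \prod_(j <- js) (1 + 'X^j)) x.
Proof.
elim: js p x => [|j js IH] p x; first by rewrite big_nil theta_poly1 mulr1.
rewrite /= big_cons => /andP[j_gt0 js_pos].
by rewrite -IH // theta_poly_comp_1DXn // IH // mulrA.
Qed.

Lemma theta_poly_comp (u v : QR l) : v \is a GRing.unit ->
  compose_n (theta_poly u) (theta_poly v) = theta_poly (u * v).
Proof.
rewrite unit_qpolyXnE => /eqP/qpolyXn_prod_1DXn[js js_pos ->].
have -> : u * in_qpoly h (\prod_(j <- js) (1 + 'X^j))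
        = in_qpoly h ((u : {poly 'F_2}) * \prod_(j <- js) (1 + 'X^j)).
  by rewrite in_qpolyM in_qpolyXnK.
by apply/ffunP => x; rewrite ffunE !theta_poly_in_qpoly theta_poly_comp_prod.
Qed.

Lemma theta_poly_qpoly1 : theta_poly (1 : QR l) = idmap_n n.
Proof. by apply/ffunP => x; rewrite -in_qpoly1 theta_poly_in_qpoly theta_poly1 ffunE. Qed.

Lemma Gnm_theta_poly f : f \in Gnm n m <-> exists2 u : QR l, u \is a GRing.unit & f = theta_poly u.
Proof.
rewrite inE; split => [/existsP[a /eqP->] | [u uU ->]].
  pose p : {poly 'F_2} := 1 + \sum_(k < l) a k *: 'X^(k.+1).
  have p0 : p`_0 = 1.
    by rewrite coefD coef1 coef_sum big1 ?addr0 // => k _; rewrite coefZ coefXn mulr0.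
  have pS (k : 'I_l) : p`_k.+1 = a k.
    rewrite coefD coef1 add0r coef_sum (bigD1 k) //= coefZ coefXn eqxx mulr1 big1 ?addr0 //.
    move=> k' k'_ne_k; rewrite coefZ coefXn eqSS eq_sym.
    by rewrite (_ : (k' == k :> nat) = false) ?mulr0 //; apply/negbTE.
  exists (in_qpoly h p); first by rewrite unit_qpolyXnE coef_in_qpolyXn p0.
  apply/ffunP => x; apply/ffunP => i; rewrite ffunE [LHS]ffunE.
  rewrite theta_poly_in_qpoly theta_poly_recl p0 mul1r theta0; congr (_ + _).
  by apply: eq_bigr => k _; rewrite pS.
move: uU; rewrite unit_qpolyXnE => /eqP u0.
apply/existsP; exists [ffun k : 'I_l => u`_k.+1]; apply/eqP/ffunP => x; apply/ffunP => i.
rewrite theta_poly_recl u0 mul1r ffunE [RHS]ffunE theta0; congr (_ + _).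
by apply: eq_bigr => k _; rewrite [X in _ = X * _]ffunE.
Qed.

Lemma muln_divn_lt : (m * l < n)%N.
Proof.
rewrite mulnC ltn_neqAle leq_trunc_div andbT.
by apply: contraNneq m_ndvd_n => <-; rewrite dvdn_mull.
Qed.

Definition delta (k : nat) : vec n := [ffun i : 'I_n => (val i == m * k)%:R].

Let i0 : 'I_n := Ordinal n_gt0.

Lemma theta_delta j k : (j <= l)%N -> (k <= l)%N -> theta n m j (delta k) i0 = (j == k)%:R.
Proof.
move=> j_le k_le; have mk_lt : (m * k < n)%N.
  by apply: leq_ltn_trans muln_divn_lt; rewrite leq_pmul2l.
have xat_delta t : (t < n)%N -> xat (delta k) t = (t == m * k)%:R.
  by move=> t_lt; rewrite xatE ffunE /= modn_small.
have [->|j_gt0] := posnP j; first by rewrite theta0 ffunE /= eq_sym muln_eq0 eqn0Ngt m_gt0 eq_sym.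
have mj_lt : (m * j < n)%N by apply: leq_ltn_trans muln_divn_lt; rewrite leq_pmul2l.
rewrite thetaE // /theta_seq add0n xat_delta // eqn_pmul2l //.
have [->|//] := eqVneq j k; last by case: quiet.
suff -> : quiet m (xat (delta k)) 0 (m * k) by [].
apply/quietP => s s_lt _; rewrite add0n xat_delta; last lia.
by rewrite ltn_eqF //; lia.
Qed.

Lemma theta_poly_delta p k : (k <= l)%N -> theta_poly p (delta k) i0 = p`_k.
Proof.
move=> k_le; rewrite theta_polyE (bigD1 (Ordinal (k_le : k < l.+1)%N)) //=.
rewrite theta_delta // eqxx mulr1.
rewrite big1 ?addr0 // => j j_ne_k; have j_le : (j <= l)%N by rewrite -ltnS.
by rewrite theta_delta // (_ : (j == k :> nat) = false) ?mulr0 //; apply/negbTE.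
Qed.

Definition qpoly_of_map (f : map_n n) : QR l := in_qpoly h (\poly_(k < l.+1) f (delta k) i0).

Lemma qpoly_of_map_theta_poly (u : QR l) : qpoly_of_map (theta_poly u) = u.
Proof.
apply: qpolyXnP => k k_lt.
by rewrite coef_in_qpolyXn k_lt coef_poly k_lt theta_poly_delta.
Qed.

End Theta.

Theorem theorem2 (n m : nat) (hn : (1 <= n)%N) (hm : (2 <= m)%N) (hmn : ~~ (m %| n)%N) :
  [/\ idmap_n n \in Gnm n m,
      {in Gnm n m &, forall f g, compose_n f g \in Gnm n m},
      {in Gnm n m, forall f, exists2 g, g \in Gnm n m & compose_n g f = idmap_n n /\ compose_n f g = idmap_n n},
      {in Gnm n m &, forall f g, compose_n f g = compose_n g f} &
      exists phi : map_n n -> QR (divn n m),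
        [/\ {in Gnm n m &, injective phi},
            phi @: Gnm n m = [set x : QR (divn n m) | x \is a GRing.unit] &
            {in Gnm n m &, forall f g, phi (compose_n f g) = phi f * phi g}]].
Proof.
have m_gt0 : (0 < m)%N := ltnW hm.
have GnmP := @Gnm_theta_poly n m.
have compE := @theta_poly_comp n m hn m_gt0 hmn.
have phiK := @qpoly_of_map_theta_poly n m hn m_gt0 hmn.
split.
- by apply/GnmP; exists 1; rewrite ?unitr1 ?theta_poly_qpoly1.
- move=> _ _ /GnmP[u uU ->] /GnmP[v vU ->]; apply/GnmP.
  by exists (u * v); rewrite ?unitrM ?uU ?compE.
- move=> _ /GnmP[u uU ->]; exists (theta_poly n m u^-1).
    by apply/GnmP; exists u^-1; rewrite ?unitrV.
  by rewrite !compE ?unitrV // mulVr // mulrV // theta_poly_qpoly1.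
- by move=> _ _ /GnmP[u uU ->] /GnmP[v vU ->]; rewrite !compE // mulrC.
exists (@qpoly_of_map n m hn); split.
- by move=> _ _ /GnmP[u _ ->] /GnmP[v _ ->]; rewrite !phiK => ->.
- apply/setP => w; rewrite inE; apply/imsetP/idP => [[_ /GnmP[u uU ->] ->]|wU].
    by rewrite phiK.
  by exists (theta_poly n m w); [apply/GnmP; exists w | rewrite phiK].
- by move=> _ _ /GnmP[u uU ->] /GnmP[v vU ->]; rewrite compE // !phiK.
Qed.
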